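(* Let $\mathfrak{g}$ be a complex two-step nilpotent Lie algebra of dimension $n\le 6$. Then $\mathfrak{g}$ admits a periodic derivation.
   Context: A derivation $D$ of a Lie algebra $\mathfrak{g}$ is called periodic if there is an integer $m\ge 1$ with $D^m=\mathrm{id}$. *)

From mathcomp Require Import all_boot all_algebra.
From mathcomp Require Import complex.
From mathcomp Require Import Rstruct.
Set Implicit Arguments. Unset Strict Implicit. Unset Printing Implicit Defensive.
Import GRing.Theory.
Local Open Scope ring_scope.

Definition CC : fieldType := complex Rdefinitions.R.

(* Every n-dimensional Lie algebra over
   F is isomorphic to one of these. *)
Definition is_lie_bracket (F : fieldType) (n : nat)
    (br : 'rV[F]_n -> 'rV[F]_n -> 'rV[F]_n) : Prop :=
  [/\ (forall (a : F) x y z, br (a *: x + y) z = a *: br x z + br y z),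
      (forall (a : F) x y z, br x (a *: y + z) = a *: br x y + br x z),
      (forall x, br x x = 0) &
      (forall x y z, br x (br y z) + br y (br z x) + br z (br x y) = 0)].

Definition two_step_nilpotent (F : fieldType) (n : nat)
    (br : 'rV[F]_n -> 'rV[F]_n -> 'rV[F]_n) : Prop :=
  (forall x y z, br x (br y z) = 0) /\ (exists x y, br x y != 0).

Definition is_derivation (F : fieldType) (n : nat)
    (br : 'rV[F]_n -> 'rV[F]_n -> 'rV[F]_n) (D : 'M[F]_n) : Prop :=
  forall x y, br x y *m D = br (x *m D) y + br x (y *m D).

Definition is_periodic_derivation (F : fieldType) (n : nat)
    (br : 'rV[F]_n -> 'rV[F]_n -> 'rV[F]_n) (D : 'M[F]_n) : Prop :=
  is_derivation br D /\ exists m : nat, (1 <= m)%N /\ D ^+ m = 1%:M.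

(* A grading of a Lie algebra by subspaces U_i with weights mu_i that are
   roots of unity, such that [U_i, U_j] lies in the sum of the U_k with
   mu_k = mu_i + mu_j, gives a periodic derivation acting on U_i as mu_i.
   Let z be a primitive sixth root of unity, so that 1 + z^2 = z.  For a
   two-step nilpotent algebra g with centre Z two kinds of gradings
   suffice: g = A + B + Z with A and B abelian (weights 1, z^2 and z), and
   the free two-step nilpotent algebra on three generators (weights 1, z^2,
   z^4 on the generators and z, z^3, z^5 on their brackets).
   When dim g <= 6, successive centralizers provide an abelian subspace
   A containing Z with g = A + <u> + <v>.  If [u, v] lies in
   [A, u] + [A, v], shifting u and v by elements of A makes them commute.  Otherwise [A, u] + [A, v] is a
   proper subspace of Z; counting dimensions, either g is free on three
   generators, or the elements of A have centralizers of codimension at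
   most 1, which provides A and B. *)
From mathcomp Require Import all_boot all_algebra.
From mathcomp Require Import complex.
From mathcomp Require Import ring Rstruct zify.
Set Implicit Arguments. Unset Strict Implicit. Unset Printing Implicit Defensive.
Import GRing.Theory Num.Theory.
Local Open Scope ring_scope.

Ltac submx_addsmx := first
  [ apply/andP; split; submx_addsmx
  | exact: submx_refl
  | rewrite addsmx_sub; apply/andP; split; submx_addsmx
  | apply: (submx_trans _ (addsmxSl _ _)); submx_addsmx
  | apply: (submx_trans _ (addsmxSr _ _)); submx_addsmx
  | by rewrite genmxE ].

Section RankComplements.
Variables (F : fieldType) (n : nat).
Implicit Type v : 'rV[F]_n.

Lemma rank_addsmx_rV m (X : 'M[F]_(m, n)) v :
  ~~ (v <= X)%MS -> \rank (X + v)%MS = (\rank X).+1.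
Proof.
move=> vNX; have v_neq0 : v != 0 by apply: contraNneq vNX => ->; apply: sub0mx.
have capX0 : \rank (X :&: v)%MS = 0%N.
  have := ltn_leqif (mxrank_leqif_sup (capmxSr X v)).
  by rewrite sub_capmx (negbTE vNX) rank_rV v_neq0; case: (\rank _).
by have := mxrank_sum_cap X v; rewrite capX0 rank_rV v_neq0 addn0 addn1.
Qed.

Lemma submx_rank_ge m m' (X : 'M[F]_(m, n)) (Y : 'M[F]_(m', n)) :
  (X <= Y)%MS -> (\rank Y <= \rank X)%N -> (Y <= X)%MS.
Proof. by move=> sXY leYX; rewrite -(mxrank_leqif_sup sXY).2 eqn_leq mxrankS. Qed.

Lemma exists_rV_rank_addsmx m m' (X : 'M[F]_(m, n)) (Y : 'M[F]_(m', n)) :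
  (\rank X < \rank Y)%N ->
  exists v, [/\ (v <= Y)%MS, ~~ (v <= X)%MS & \rank (X + v)%MS = (\rank X).+1].
Proof.
move=> ltXY; have /row_subPn[i YiNX] : ~~ (Y <= X)%MS.
  by apply/negP => /mxrankS; rewrite leqNgt ltXY.
by exists (row i Y); rewrite row_sub YiNX rank_addsmx_rV.
Qed.

Lemma exists_rV_rank_addsmx_min m (X : 'M[F]_(m, n)) :
  exists v, \rank (X + v)%MS = minn (\rank X).+1 n.
Proof.
have [ltXn | leNX] := ltnP (\rank X) n.
  have [|v [_ _ rv]] := @exists_rV_rank_addsmx _ n X 1%:M; first by rewrite mxrank1.
  by exists v; rewrite rv (minn_idPl ltXn).
exists 0; rewrite addsmx0 (minn_idPr (leqW _)) //.
by apply/eqP; rewrite eqn_leq rank_leq_col.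
Qed.

Lemma exists_codim2_complement m (X : 'M[F]_(m, n)) : (n <= \rank X + 2)%N ->
  exists u v : 'rV_n, (1%:M <= X + u + v)%MS.
Proof.
move=> leX; have [u ru] := exists_rV_rank_addsmx_min X.
have [v rv] := exists_rV_rank_addsmx_min (X + u)%MS.
by exists u, v; rewrite sub1mx /row_full rv ru; apply/eqP; lia.
Qed.

End RankComplements.

Section LieBracket.
Variables (F : fieldType) (n : nat) (br : 'rV[F]_n -> 'rV[F]_n -> 'rV[F]_n).
Hypothesis br_lie : is_lie_bracket br.

Lemma brDl x y z : br (x + y) z = br x z + br y z.
Proof. by case: br_lie => brl _ _ _; have := brl 1 x y z; rewrite !scale1r. Qed.

Lemma brDr x y z : br z (x + y) = br z x + br z y.
Proof. by case: br_lie => _ brr _ _; have := brr 1 z x y; rewrite !scale1r. Qed.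

Lemma br0l z : br 0 z = 0.
Proof. by apply: (@addIr _ (br 0 z)); rewrite -brDl !add0r. Qed.

Lemma br0r z : br z 0 = 0.
Proof. by apply: (@addIr _ (br z 0)); rewrite -brDr !add0r. Qed.

Lemma brZl a x z : br (a *: x) z = a *: br x z.
Proof. by case: br_lie => brl _ _ _; have := brl a x 0 z; rewrite !addr0 br0l addr0. Qed.

Lemma brZr a x z : br z (a *: x) = a *: br z x.
Proof. by case: br_lie => _ brr _ _; have := brr a z x 0; rewrite !addr0 br0r addr0. Qed.

Lemma brNr x z : br z (- x) = - br z x.
Proof. by rewrite -scaleN1r brZr scaleN1r. Qed.

Lemma brxx x : br x x = 0.
Proof. by case: br_lie. Qed.

Lemma br_skew x y : br x y = - br y x.
Proof.
apply/eqP; rewrite -addr_eq0; apply/eqP.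
by have := brxx (x + y); rewrite brDl !brDr !brxx add0r addr0.
Qed.

Lemma br_suml (I : Type) (r : seq I) (P : pred I) (f : I -> 'rV_n) z :
  br (\sum_(i <- r | P i) f i) z = \sum_(i <- r | P i) br (f i) z.
Proof. by apply: (big_morph (br^~ z)); [move=> x y; apply: brDl | apply: br0l]. Qed.

Lemma br_sumr (I : Type) (r : seq I) (P : pred I) (f : I -> 'rV_n) z :
  br z (\sum_(i <- r | P i) f i) = \sum_(i <- r | P i) br z (f i).
Proof. by apply: (big_morph (br z)); [move=> x y; apply: brDr | apply: br0r]. Qed.

Definition ad_mx x : 'M[F]_n := \matrix_j br x 'e_j.

Lemma mul_ad_mx x y : y *m ad_mx x = br x y.
Proof.
rewrite mulmx_sum_row [in RHS](row_sum_delta y) br_sumr.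
by apply: eq_bigr => j _; rewrite rowK brZr.
Qed.

Definition center_mx : 'M[F]_n := (\bigcap_(j < n) kermx (ad_mx 'e_j))%MS.
Local Notation Z := center_mx.

Lemma center_mxP v : reflect (forall y, br y v = 0) (v <= Z)%MS.
Proof.
apply: (iffP sub_bigcapmxP) => [vZ y | vZ j _]; last by rewrite sub_kermx mul_ad_mx vZ.
rewrite (row_sum_delta y) br_suml big1 // => j _.
by have /(_ isT) := vZ j; rewrite sub_kermx mul_ad_mx brZl => /eqP ->; rewrite scaler0.
Qed.

Lemma br_center_mxl v y : (v <= Z)%MS -> br v y = 0.
Proof. by move/center_mxP=> vZ; rewrite br_skew vZ oppr0. Qed.

Definition centralizer_mx x : 'M[F]_n := kermx (ad_mx x).

Lemma sub_centralizer_mx x v : (v <= centralizer_mx x)%MS = (br x v == 0).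
Proof. by rewrite sub_kermx mul_ad_mx. Qed.

Lemma rank_centralizer_mx x : \rank (centralizer_mx x) = (n - \rank (ad_mx x))%N.
Proof. exact: mxrank_ker. Qed.

Definition commute_mx m1 m2 (M : 'M[F]_(m1, n)) (N : 'M[F]_(m2, n)) :=
  forall u v : 'rV_n, (u <= M)%MS -> (v <= N)%MS -> br u v = 0.

Notation abelian_mx M := (commute_mx M M).

Lemma commute_mxC m1 m2 (M : 'M[F]_(m1, n)) (N : 'M[F]_(m2, n)) :
  commute_mx M N -> commute_mx N M.
Proof. by move=> cMN u v uN vM; rewrite br_skew cMN ?oppr0. Qed.

Lemma commute_mxS m1 m2 m3 m4 (M : 'M[F]_(m1, n)) (N : 'M[F]_(m2, n))
    (M' : 'M[F]_(m3, n)) (N' : 'M[F]_(m4, n)) :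
  (M' <= M)%MS -> (N' <= N)%MS -> commute_mx M N -> commute_mx M' N'.
Proof.
by move=> sM sN cMN u v uM vN; apply: cMN; [apply: submx_trans sM | apply: submx_trans sN].
Qed.

Lemma commute_addsmxl m1 m2 m3 (M1 : 'M[F]_(m1, n)) (M2 : 'M[F]_(m2, n))
    (N : 'M[F]_(m3, n)) :
  commute_mx M1 N -> commute_mx M2 N -> commute_mx (M1 + M2)%MS N.
Proof.
by move=> c1 c2 u v /sub_addsmxP[[p q] /= ->] vN; rewrite brDl c1 ?c2 ?addr0 ?submxMl.
Qed.

Lemma commute_addsmxr m1 m2 m3 (M : 'M[F]_(m1, n)) (N1 : 'M[F]_(m2, n))
    (N2 : 'M[F]_(m3, n)) :
  commute_mx M N1 -> commute_mx M N2 -> commute_mx M (N1 + N2)%MS.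
Proof.
by move=> c1 c2; apply: commute_mxC; apply: commute_addsmxl; apply: commute_mxC.
Qed.

Lemma commute_rV x y : br x y = 0 -> commute_mx x y.
Proof. by move=> xy0 u v /sub_rVP[a ->] /sub_rVP[b ->]; rewrite brZl brZr xy0 !scaler0. Qed.

Lemma commute_center_mxl m1 (N : 'M[F]_(m1, n)) : commute_mx Z N.
Proof. by move=> u v /br_center_mxl. Qed.

Lemma commute_center_mxr m1 (N : 'M[F]_(m1, n)) : commute_mx N Z.
Proof. by apply: commute_mxC; apply: commute_center_mxl. Qed.

Ltac commute_mx_tac := repeat match goal with
  | |- commute_mx _ _ => first
    [ apply: commute_addsmxl | apply: commute_addsmxr
    | apply: commute_center_mxl | apply: commute_center_mxr | apply: commute_rV ]
  end; try done; rewrite ?brxx // br_skew; apply/eqP; rewrite oppr_eq0; apply/eqP; done.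

Definition graded_bracket m (U : 'I_m -> 'M[F]_n) (mu : 'I_m -> F) :=
  forall i j u v, (u <= U i)%MS -> (v <= U j)%MS ->
    (br u v <= \sum_(k | mu k == (mu i + mu j)%R) U k)%MS.

(* The rank bound makes the sum of the [U i] direct. *)
Lemma graded_periodic_derivation m N (U : 'I_m -> 'M[F]_n) (mu : 'I_m -> F) :
  (0 < N)%N -> (forall i, mu i ^+ N = 1) ->
  (1%:M <= \sum_i U i)%MS -> (\sum_i \rank (U i) <= n)%N ->
  graded_bracket U mu -> exists D, is_periodic_derivation br D.
Proof.
move=> N_gt0 muN full rankU grU.
have /mxdirect_sumsP dirU : mxdirect (\sum_i U i).
  rewrite mxdirectE /= eqn_leq (mxrank_sum_leqif _).1 /= (leq_trans rankU) //.
  by rewrite -{1}(mxrank1 F n) mxrankS.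
pose D := \sum_j mu j *: proj_mx (U j) (\sum_(l | l != j) U l)%MS.
have DU j (u : 'rV_n) : (u <= U j)%MS -> u *m D = mu j *: u.
  move=> uU; rewrite mulmx_sumr (bigD1 j) //= -scalemxAr proj_mx_id ?dirU //.
  rewrite big1 ?addr0 // => l lj; rewrite -scalemxAr proj_mx_0 ?scaler0 ?dirU //.
  by apply: (sumsmx_sup j); rewrite // eq_sym.
have DUsum lam (w : 'rV_n) : (w <= \sum_(k | mu k == lam) U k)%MS -> w *m D = lam *: w.
  case/sub_sumsmxP => w_ ->; rewrite mulmx_suml scaler_sumr.
  by apply: eq_bigr => k /eqP <-; rewrite (DU k) ?submxMl.
have decU (x : 'rV_n) : exists2 xs : 'I_m -> 'rV_n,
    forall i, (xs i <= U i)%MS & x = \sum_i xs i.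
  have /sub_sumsmxP[x_ ->] : (x <= \sum_i U i)%MS := submx_trans (submx1 x) full.
  by exists (fun i => x_ i *m U i) => // i; apply: submxMl.
have DXU k (xs : 'I_m -> 'rV_n) : (forall i, (xs i <= U i)%MS) ->
    (\sum_i xs i) *m D ^+ k = \sum_i mu i ^+ k *: xs i.
  move=> xsU; elim: k => [|k IHk].
    by rewrite mulmx1; apply: eq_bigr => i _; rewrite scale1r.
  rewrite exprSr -mulmxE mulmxA IHk mulmx_suml; apply: eq_bigr => i _.
  by rewrite -scalemxAl (DU i) // scalerA exprSr.
have DX (xs : 'I_m -> 'rV_n) : (forall i, (xs i <= U i)%MS) ->
    (\sum_i xs i) *m D = \sum_i mu i *: xs i.
  by move=> xsU; rewrite -[D]expr1 DXU //; under eq_bigr do rewrite expr1.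
exists D; split.
  move=> x y; have [xs xsU ->] := decU x; have [ys ysU ->] := decU y.
  rewrite !DX // !br_suml mulmx_suml -big_split /=.
  apply: eq_bigr => i _; rewrite !br_sumr mulmx_suml -big_split /=.
  apply: eq_bigr => j _; rewrite brZl brZr -scalerDl.
  by apply: DUsum; apply: grU.
exists N; split => //; apply/row_matrixP => i; rewrite !rowE mulmx1.
have [xs xsU xsE] := decU 'e_i; rewrite xsE DXU //.
by apply: eq_bigr => j _; rewrite muN scale1r.
Qed.

Definition bracket_span (A : 'M[F]_n) u v := (A *m ad_mx u + A *m ad_mx v)%MS.

Section TwoStep.
Hypothesis br_central : forall x y w, br x (br y w) = 0.

Lemma br_central_l x y w : br (br x y) w = 0.
Proof. by rewrite br_skew br_central oppr0. Qed.

Lemma br_sub_center x y : (br x y <= Z)%MS.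
Proof. by apply/center_mxP => w; apply: br_central. Qed.

Lemma ad_mx_sub_center x : (ad_mx x <= Z)%MS.
Proof. by apply/row_subP => j; rewrite rowK br_sub_center. Qed.

Lemma center_mx_ad_mx x : Z *m ad_mx x = 0.
Proof.
apply/row_matrixP => i; rewrite row_mul mul_ad_mx row0.
by apply/center_mxP; apply: row_sub.
Qed.

Lemma rank_centralizer_mx_ge x : (n - \rank Z <= \rank (centralizer_mx x))%N.
Proof. by rewrite rank_centralizer_mx leq_sub2l ?mxrankS ?ad_mx_sub_center. Qed.

Lemma bracket_span_sub_center (A : 'M[F]_n) u v :
  (bracket_span A u v <= Z)%MS.
Proof.
by rewrite addsmx_sub !(submx_trans (submxMl _ _)) ?ad_mx_sub_center.
Qed.

Lemma rank_bracket_span_lt (A : 'M[F]_n) u v :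
  ~~ (br u v <= bracket_span A u v)%MS ->
  (\rank (bracket_span A u v) < \rank Z)%N.
Proof.
move=> uvNI; rewrite -ltnS -(rank_addsmx_rV uvNI) ltnS mxrankS //.
by rewrite addsmx_sub bracket_span_sub_center br_sub_center.
Qed.

(* The roots of X^2 - X + 1 are the primitive sixth roots of unity. *)
Variable z : F.
Hypothesis z_root : z ^+ 2 = z - 1.

Lemma expzD2 k : z ^+ k + z ^+ k.+2 = z ^+ k.+1.
Proof. by rewrite !exprS mulrA -expr2 z_root; ring. Qed.

Lemma expz6 : z ^+ 6 = 1.
Proof.
have z3 : z ^+ 3 = -1 by rewrite exprS z_root mulrBr -expr2 z_root; ring.
by rewrite (exprM z 3 2) z3 expr2 mulrNN mulr1.
Qed.

Lemma expz_root6 k : (z ^+ k) ^+ 6 = 1.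
Proof. by rewrite -exprM mulnC exprM expz6 expr1n. Qed.

Lemma abelian_pair_periodic m1 m2 (A : 'M[F]_(m1, n)) (B : 'M[F]_(m2, n)) :
  abelian_mx A -> abelian_mx B -> (1%:M <= A + B + Z)%MS ->
  exists D, is_periodic_derivation br D.
Proof.
move=> abA abB full.
set B1 := (B :\: Z)%MS; set A1 := (A :\: (B + Z))%MS.
have B1Z : (B1 :&: Z)%MS = 0 := capmx_diff B Z.
have A1BZ : (A1 :&: (B1 + Z))%MS = 0.
  apply/eqP; rewrite -submx0 -(capmx_diff A (B + Z)%MS).
  by apply: capmxS => //; apply: addsmxS => //; apply: diffmxSl.
have sBZ : (B <= B1 + Z)%MS.
  by rewrite -{1}(addsmx_diff_cap_eq B Z); apply: addsmxS (capmxSr B Z).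
have sABZ : (A <= A1 + (B1 + Z))%MS.
  rewrite -{1}(addsmx_diff_cap_eq A (B + Z)%MS); apply: addsmxS => //.
  by rewrite (submx_trans (capmxSr _ _)) // addsmx_sub sBZ addsmxSr.
apply: (@graded_periodic_derivation 3 6 (fun i => nth 0 [:: A1; Z; B1] i)
  (fun i => z ^+ i)) => //; rewrite ?big_ord_recl ?big_ord0 /=.
- by move=> i; apply: expz_root6.
- apply: submx_trans full _; rewrite !addsmx_sub.
  rewrite (submx_trans sABZ) ?(submx_trans sBZ) //=; submx_addsmx.
- rewrite addn0 [(\rank Z + _)%N]addnC -(mxrank_disjoint_sum B1Z).
  by rewrite -(mxrank_disjoint_sum A1BZ) rank_leq_col.
have sub_center k (x y : 'rV_n) :
    z ^+ 1 = k -> (br x y <= \sum_(l < 3 | z ^+ l == k) [:: A1; Z; B1]`_l)%MS.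
  by move=> <-; apply: (sumsmx_sup (@Ordinal 3 1 isT)) => //=; apply: br_sub_center.
move=> i j u v; case: i => [[|[|[|//]]] ?]; case: j => [[|[|[|//]]] ?] /= uA vB.
- by rewrite abA ?sub0mx // ?(submx_trans uA) ?(submx_trans vB) ?diffmxSl.
- by move/center_mxP: vB => ->; rewrite sub0mx.
- by apply: sub_center; rewrite expzD2.
- by rewrite br_center_mxl ?sub0mx.
- by rewrite br_center_mxl ?sub0mx.
- by rewrite br_center_mxl ?sub0mx.
- by apply: sub_center; rewrite addrC expzD2.
- by move/center_mxP: vB => ->; rewrite sub0mx.
- by rewrite abB ?sub0mx // ?(submx_trans uA) ?(submx_trans vB) ?diffmxSl.
Qed.

Lemma abelian_codim1_periodic (A : 'M[F]_n) :
  abelian_mx A -> (n <= \rank A + 1)%N -> exists D, is_periodic_derivation br D.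
Proof.
move=> abA leA; have [w rw] := exists_rV_rank_addsmx_min A.
have full : (1%:M <= A + w)%MS by rewrite sub1mx /row_full rw; apply/eqP; lia.
exact: (abelian_pair_periodic abA (commute_rV (brxx w)) (submx_trans full (addsmxSl _ _))).
Qed.

(* The k-th vector of [x, [x,u], u, [u,v], v, [v,x]] gets weight z^k: the
   bracket of the generators in positions k and k + 2 (mod 6) sits in
   position k + 1. *)
Lemma free3_periodic (x u v : 'rV_n) : (6 <= n)%N ->
  (1%:M <= x + u + v + br x u + br u v + br v x)%MS ->
  exists D, is_periodic_derivation br D.
Proof.
move=> n6 full.
apply: (@graded_periodic_derivation 6 6
  (fun k => <<[:: x; br x u; u; br u v; v; br v x]`_k>>%MS) (fun k => z ^+ k)) => //.
- by move=> k; apply: expz_root6.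
- apply: submx_trans full _; rewrite !big_ord_recl big_ord0 /=; submx_addsmx.
- apply: leq_trans n6; apply: (@leq_trans (\sum_(k < 6) 1)%N).
    by apply: leq_sum => k _; rewrite mxrank_gen rank_rV leq_b1.
  by rewrite sum1_card card_ord.
move=> i j a b; rewrite !genmxE => /sub_rVP[c ->] /sub_rVP[d ->].
rewrite brZl brZr !scalemx_sub //.
case: i => [[|[|[|[|[|[|//]]]]]] ?]; case: j => [[|[|[|[|[|[|//]]]]]] ?] /=;
  rewrite ?brxx ?br_central ?br_central_l ?sub0mx //.
- by apply: (sumsmx_sup (@Ordinal 6 1 isT)); rewrite /= ?expzD2 ?genmxE.
- apply: (sumsmx_sup (@Ordinal 6 5 isT)); rewrite /= ?genmxE.
    by rewrite expr0 -expz6 addrC expzD2.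
  by rewrite br_skew eqmx_opp.
- apply: (sumsmx_sup (@Ordinal 6 1 isT)); rewrite /= ?genmxE.
    by rewrite addrC expzD2.
  by rewrite br_skew eqmx_opp.
- by apply: (sumsmx_sup (@Ordinal 6 3 isT)); rewrite /= ?expzD2 ?genmxE.
- by apply: (sumsmx_sup (@Ordinal 6 5 isT)); rewrite /= ?genmxE // expr0 -expz6 expzD2.
- apply: (sumsmx_sup (@Ordinal 6 3 isT)); rewrite /= ?genmxE.
    by rewrite addrC expzD2.
  by rewrite br_skew eqmx_opp.
Qed.

Lemma ad_mx_sub_bracket_span (A : 'M[F]_n) u v a : abelian_mx A ->
  (1%:M <= A + u + v)%MS -> (a <= A)%MS -> (ad_mx a <= bracket_span A u v)%MS.
Proof.
move=> abA full aA; rewrite -[ad_mx a]mul1mx.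
apply: submx_trans (submxMr (ad_mx a) full) _; rewrite !(addsmxMr, addsmx_sub).
have -> : A *m ad_mx a = 0.
  by apply/row_matrixP => i; rewrite row_mul mul_ad_mx row0 abA ?row_sub.
rewrite sub0mx !mul_ad_mx br_skew [br a v]br_skew -!mul_ad_mx !eqmx_opp /=.
by rewrite !(submx_trans (submxMr _ aA)) ?addsmxSl ?addsmxSr.
Qed.

(* If [u, v] = [u, b] + [v, a] with [a], [b] in [A], then [u + a] and
   [v - b] commute. *)
Lemma abelian_codim2_periodic (A : 'M[F]_n) u v : abelian_mx A ->
  (1%:M <= A + u + v)%MS -> (br u v <= bracket_span A u v)%MS ->
  exists D, is_periodic_derivation br D.
Proof.
move=> abA full /sub_addsmxP[[p q] /=]; rewrite !mulmxA !mul_ad_mx.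
set b := p *m A; set a := q *m A => uvE.
have [aA bA] : (a <= A)%MS /\ (b <= A)%MS by rewrite !submxMl.
have uv' : br (u + a) (v - b) = 0.
  rewrite brDl !brDr !brNr uvE (br_skew a v) (abA a b) //.
  by rewrite subr0 addrAC addrK subrr.
apply: (abelian_pair_periodic abA (B := ((u + a)%R + (v - b)%R)%MS)).
  by do 2![apply: commute_addsmxl | apply: commute_addsmxr]; apply: commute_rV;
    rewrite ?brxx ?uv' // br_skew uv' oppr0.
have shift (w c : 'rV_n) : (c <= A)%MS -> (w <= (w + c)%R + A)%MS.
  move=> cA; rewrite -[w in (w <= _)%MS](addrK c).
  by apply: addmx_sub_adds; rewrite ?eqmx_opp.
apply: (submx_trans full); rewrite !addsmx_sub.
by rewrite (submx_trans (shift u a aA)) ?(submx_trans (shift v (- b) _)) ?eqmx_opp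
  ?andbT //=; submx_addsmx.
Qed.

Lemma abelian_codim2_periodic_or (A : 'M[F]_n) :
  abelian_mx A -> (n <= \rank A + 2)%N ->
  (exists D, is_periodic_derivation br D) \/
  exists u v, (1%:M <= A + u + v)%MS /\ ~~ (br u v <= bracket_span A u v)%MS.
Proof.
move=> abA leA; have [u [v full]] := exists_codim2_complement leA.
have [uvI | uvNI] := boolP (br u v <= bracket_span A u v)%MS.
  by left; apply: (abelian_codim2_periodic abA full uvI).
by right; exists u, v.
Qed.

(* The centralizers of [x] and [y] are hyperplanes containing [A].  A vector
   [m] of the first outside [A] either centralizes all of [A], or it pairs
   with a vector [m'] of the second into the abelian pieces [Z + x + m] and
   [y + m']. *)
Lemma abelian_codim2_rank1_periodic (A : 'M[F]_n) (x y : 'rV_n) :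
  abelian_mx A -> (x <= A)%MS -> (y <= A)%MS -> (A <= Z + x + y)%MS ->
  (\rank (ad_mx x) <= 1)%N -> (\rank (ad_mx y) <= 1)%N -> (n <= \rank A + 2)%N ->
  exists D, is_periodic_derivation br D.
Proof.
move=> abA xA yA sAxy adx1 ady1 leA.
have [leA1 | ltA] := leqP n (\rank A + 1).
  exact: (abelian_codim1_periodic abA leA1).
have ltC w : (\rank (ad_mx w) <= 1)%N -> (\rank A < \rank (centralizer_mx w))%N.
  by rewrite rank_centralizer_mx; lia.
have [m [/[!sub_centralizer_mx]/eqP xm _ rm]] := exists_rV_rank_addsmx (ltC x adx1).
have [m' [/[!sub_centralizer_mx]/eqP ym' _ rm']] :=
  exists_rV_rank_addsmx (ltC y ady1).
have [m'Am | m'NAm] := boolP (m' <= A + m)%MS.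
  have sAm : (m <= A + m')%MS.
    apply: submx_trans (addsmxSr A m) _; apply: submx_rank_ge; last by rewrite rm rm'.
    by rewrite addsmx_sub addsmxSl.
  have ym : br y m = 0.
    apply: (commute_mxS (submx_refl y) sAm) => //; apply: commute_addsmxr.
      exact: (commute_mxS yA (submx_refl A) abA).
    exact: commute_rV.
  have cAm : commute_mx A m.
    by apply: (commute_mxS sAxy (submx_refl m)); commute_mx_tac.
  apply: (abelian_codim1_periodic (A := (A + m)%MS)); last by rewrite rm; lia.
  have cmA := commute_mxC cAm; commute_mx_tac.
have full : (1%:M <= A + m + m')%MS.
  by rewrite sub1mx /row_full rank_addsmx_rV // rm; apply/eqP; lia.
apply: (@abelian_pair_periodic _ _ (Z + x + m)%MS (y + m')%MS).
- commute_mx_tac.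
- commute_mx_tac.
apply: (submx_trans full); rewrite !addsmx_sub (submx_trans sAxy) //=; submx_addsmx.
Qed.

Lemma center_codim2_periodic :
  (n <= \rank Z + 2)%N -> exists D, is_periodic_derivation br D.
Proof.
move=> leZ; have [x rx] := exists_rV_rank_addsmx_min Z.
apply: (abelian_codim1_periodic (A := (Z + x)%MS)); first by commute_mx_tac.
by rewrite rx; lia.
Qed.

Lemma center_codim3_periodic : n = (\rank Z).+3 -> (n <= 6)%N ->
  exists D, is_periodic_derivation br D.
Proof.
move=> nZ n6; have [x rx] := exists_rV_rank_addsmx_min Z.
set A := (Z + x)%MS; have xA : (x <= A)%MS := addsmxSr Z x.
have abA : abelian_mx A by commute_mx_tac.
have [|//|[u [v [full uvNI]]]] := abelian_codim2_periodic_or abA.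
  by rewrite rx; lia.
have ltI := rank_bracket_span_lt uvNI.
have [I_ge2 | I_le1] := leqP 2 (\rank (bracket_span A u v)); last first.
  have adx1 : (\rank (ad_mx x) <= 1)%N.
    by rewrite -ltnS (leq_ltn_trans (mxrankS (ad_mx_sub_bracket_span abA full xA))).
  apply: (abelian_codim2_rank1_periodic abA xA xA _ adx1 adx1); last by rewrite rx; lia.
  by rewrite /A; submx_addsmx.
have ZI : (Z <= bracket_span A u v + br u v)%MS.
  apply: submx_rank_ge; last by rewrite rank_addsmx_rV //; lia.
  by rewrite addsmx_sub bracket_span_sub_center br_sub_center.
have IAx : (bracket_span A u v <= br x u + br v x)%MS.
  rewrite addsmx_sub !addsmxMr !center_mx_ad_mx !mul_ad_mx [br u x]br_skew.
  by rewrite !addsmx_sub !sub0mx eqmx_opp /= addsmxSl addsmxSr.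
apply: (free3_periodic (x := x) (u := u) (v := v)); first lia.
apply: (submx_trans full); rewrite /A !addsmx_sub (submx_trans ZI) /=.
  by submx_addsmx.
by rewrite addsmx_sub (submx_trans IAx) /=; submx_addsmx.
Qed.

Lemma center_codim4_periodic : n = (\rank Z).+4 -> (n <= 6)%N ->
  exists D, is_periodic_derivation br D.
Proof.
move=> nZ n6; have [x rx] := exists_rV_rank_addsmx_min Z.
have [|y [/[!sub_centralizer_mx]/eqP xy _ ry]] :=
  exists_rV_rank_addsmx (X := (Z + x)%MS) (Y := centralizer_mx x).
  by rewrite rx; have := rank_centralizer_mx_ge x; lia.
set A := (Z + x + y)%MS.
have [xA yA] : (x <= A)%MS /\ (y <= A)%MS by split; submx_addsmx.
have abA : abelian_mx A by commute_mx_tac.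
have [|//|[u [v [full uvNI]]]] := abelian_codim2_periodic_or abA.
  by rewrite ry rx; lia.
have ad_le1 a : (a <= A)%MS -> (\rank (ad_mx a) <= 1)%N.
  move=> aA; have := mxrankS (ad_mx_sub_bracket_span abA full aA).
  by have := rank_bracket_span_lt uvNI; lia.
apply: (abelian_codim2_rank1_periodic abA xA yA _ (ad_le1 x xA) (ad_le1 y yA)) => //.
by rewrite ry rx; lia.
Qed.

(* In codimension 5 the centre is a line, so the second alternative leaves
   [[A, u] + [A, v] = 0] and [x] would be central. *)
Lemma center_codim5_periodic : n = (\rank Z + 5)%N -> (n <= 6)%N ->
  exists D, is_periodic_derivation br D.
Proof.
move=> nZ n6.
have [|x [_ xNZ rx]] := exists_rV_rank_addsmx (X := Z) (Y := 1%:M : 'M_n).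
  by rewrite mxrank1; lia.
have [|y [/[!sub_centralizer_mx]/eqP xy _ ry]] :=
  exists_rV_rank_addsmx (X := (Z + x)%MS) (Y := centralizer_mx x).
  by rewrite rx; have := rank_centralizer_mx_ge x; lia.
have [|t [/[!sub_capmx]/andP[]/[!sub_centralizer_mx]/eqP xt /eqP yt _ rt]] :=
  exists_rV_rank_addsmx (X := (Z + x + y)%MS)
    (Y := (centralizer_mx x :&: centralizer_mx y)%MS).
  have := mxrank_sum_cap (centralizer_mx x) (centralizer_mx y).
  have := rank_leq_col (centralizer_mx x + centralizer_mx y)%MS.
  by have := rank_centralizer_mx_ge x; have := rank_centralizer_mx_ge y; rewrite ry rx; lia.
set A := (Z + x + y + t)%MS; have xA : (x <= A)%MS by submx_addsmx.
have abA : abelian_mx A by commute_mx_tac.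
have [|//|[u [v [full uvNI]]]] := abelian_codim2_periodic_or abA.
  by rewrite rt ry rx; lia.
have /eqP : \rank (ad_mx x) = 0%N.
  have := mxrankS (ad_mx_sub_bracket_span abA full xA).
  by have := rank_bracket_span_lt uvNI; lia.
rewrite mxrank_eq0 => /eqP adx0; case/negP: xNZ; apply/center_mxP => w.
by rewrite br_skew -mul_ad_mx adx0 mulmx0 oppr0.
Qed.

Lemma two_step_periodic : (exists x y, br x y != 0) -> (n <= 6)%N ->
  exists D, is_periodic_derivation br D.
Proof.
move=> [x [y xy_neq0]] n6.
have rankZ_gt0 : (0 < \rank Z)%N.
  by have := mxrankS (br_sub_center x y); rewrite rank_rV xy_neq0.
have [|lt2] := leqP n (\rank Z + 2); first exact: center_codim2_periodic.
have [e3 | ne3] := eqVneq n (\rank Z).+3; first exact: center_codim3_periodic.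
have [e4 | ne4] := eqVneq n (\rank Z).+4; first exact: center_codim4_periodic.
by apply: center_codim5_periodic => //; have := rank_leq_col Z; lia.
Qed.

End TwoStep.
End LieBracket.

Lemma exists_primitive_sixth_root : exists z : CC, z ^+ 2 = z - 1.
Proof.
pose s := sqrtc (-3 : CC); have s2 : s ^+ 2 = -3 := sqr_sqrtc _.
have two_neq0 : (2 : CC) != 0 by rewrite pnatr_eq0.
exists ((1 + s) / 2); rewrite expr_div_n sqrrD s2.
by field.
Qed.

Theorem proposition2p11 (n : nat) (br : 'rV[CC]_n -> 'rV[CC]_n -> 'rV[CC]_n) :
  (n <= 6)%N -> is_lie_bracket br -> two_step_nilpotent br ->
  exists D : 'M[CC]_n, is_periodic_derivation br D.
Proof.
move=> n6 br_lie [br_central nontrivial].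
have [z z_root] := exists_primitive_sixth_root.
exact: (two_step_periodic br_lie br_central z_root nontrivial n6).
Qed.
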